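(* Let $G$ be a finite group of $F$-class $c \ge 1$ with covering group $G^*$ (with respect to some finite generating tuple of $G$), multiplicator $M$ and nucleus $N$. If $U$ is an allowable subgroup of $G^*$, then $G^*/U$ is a descendant of $G$.
   Context: For a finite group $X$, $F(X)$ is its Fitting subgroup; the $F$-central series is $\nu_0(X)=F(X)$ and $\nu_{i+1}(X)$ is the smallest normal subgroup $N'$ of $F(X)$ with $N'\le\nu_i(X)$ such that $\nu_i(X)/N'$ is centralized by $F(X)$ and is a direct product of elementary abelian groups; the $F$-class is the least $c$ with $\nu_c(X)=1$, and the $F$-rank is $|\nu_0(X)/\nu_1(X)|$. Covering group: with $g_1,\dots,g_n$ generating $G$, $F$ free on $f_1,\dots,f_n$, $\mu:F\to G$, $f_i\mapsto g_i$, $R=\ker\mu$, $L=\mu^{-1}(F(G))$, $k$ the product of the distinct primes dividing the $F$-rank of $G$: $G^*=F/[R,L]R^k$, $M=R/[R,L]R^k$ (so $G^*/M\cong G$). The nucleus is $N=\nu_c(G^* )$. A subgroup $U$ of $G^*$ is allowable if $U$ is a proper subgroup of $M$, normal in $G^*$, with $M=NU$. A group $H$ is a descendant of $G$ if $H$ has $F$-class $c+1$ and $H/\nu_c(H)\cong G$. *)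

From HB Require Import structures.
From mathcomp Require Import all_boot all_fingroup all_solvable.
Set Implicit Arguments. Unset Strict Implicit. Unset Printing Implicit Defensive.
Import GroupScope.

(* Possibly infinite groups (needed for the free group F).            *)
Record grp := Grp {
  gcar :> Type;
  gmul : gcar -> gcar -> gcar;
  ginv : gcar -> gcar;
  gone : gcar;
  gmulA : associative gmul;
  gmul1 : left_id gone gmul;
  gmulV : left_inverse gone ginv gmul }.

Definition fin_grp (gT : finGroupType) : grp :=
  @Grp gT (@mulg gT) (@invg gT) 1 (@mulgA gT) (@mul1g gT) (@mulVg gT).

Definition is_ghom (A B : grp) (phi : A -> B) : Prop :=
  forall x y, phi (gmul x y) = gmul (phi x) (phi y).

Inductive gen_by (A : grp) (S : A -> Prop) : A -> Prop :=
| gen_in x : S x -> gen_by S x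
| gen_one : gen_by S (gone A)
| gen_mul x y : gen_by S x -> gen_by S y -> gen_by S (gmul x y)
| gen_inv x : gen_by S x -> gen_by S (ginv x).

Definition free_on (A : grp) (n : nat) (f : 'I_n -> A) : Prop :=
  (forall x, gen_by (fun y => exists i, y = f i) x) /\
  (forall (B : grp) (h : 'I_n -> B),
     exists phi : A -> B, is_ghom phi /\ forall i, phi (f i) = h i).

Definition gcomm (A : grp) (x y : A) : A :=
  gmul (gmul (ginv x) (ginv y)) (gmul x y).
Definition gpow (A : grp) (x : A) (k : nat) : A := iter k (gmul x) (gone A).

Section FSeries.
Variable gT : finGroupType.
Implicit Types X V N : {group gT}.

(* N is a candidate for nu_{i+1}(X) when V = nu_i(X):
   N normal subgroup of F(X), N <= V, V/N centralized by F(X),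
   V/N a direct product of elementary abelian groups *)
Definition Fcand X V N : bool :=
  [&& N <| 'F(X), N \subset V, [~: V, 'F(X)] \subset N,
      abelian (V / N)
    & all (fun p => p.-abelem 'O_p(V / N)) (primes #|V / N|)].

Fixpoint Fnu X (i : nat) : {group gT} :=
  match i with
  | 0 => 'F(X)%G
  | i.+1 => let V := Fnu X i in
            [group of \bigcap_(N : {group gT} | Fcand X V N) N]
  end.

Definition has_Fclass X (c : nat) : bool :=
  (Fnu X c == 1 :> {set gT}) && [forall j : 'I_c, Fnu X j != 1 :> {set gT}].

Definition Frank X : nat := #|Fnu X 0 / Fnu X 1|.

Definition Fk X : nat := \prod_(p <- primes (Frank X)) p.

End FSeries.

Definition descendant (hT gT : finGroupType) (H : {group hT}) (G : {group gT})
  (c : nat) : bool :=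
  has_Fclass H c.+1 && (H / Fnu H c \isog G).

(* R = ker mu, L = mu^-1(F(G)), K = [R,L] R^k *)
Definition covR (A : grp) (gT : finGroupType) (mu : A -> gT) (x : A) : Prop :=
  mu x = 1.
Definition covL (A : grp) (gT : finGroupType) (G : {group gT}) (mu : A -> gT)
  (x : A) : Prop := mu x \in 'F(G).
Definition covK (A : grp) (gT : finGroupType) (G : {group gT}) (mu : A -> gT)
  : A -> Prop :=
  gen_by (fun z => (exists r l, covR mu r /\ covL G mu l /\ z = gcomm r l)
                 \/ (exists r, covR mu r /\ z = gpow r (Fk G))).

(* (sT, Gs, pi) is a realization of G^* = F/K: pi : F -> Gs is a surjective
   homomorphism with kernel K, so Gs is isomorphic to F/[R,L]R^k. *)
Definition covering_map (A : grp) (gT : finGroupType) (G : {group gT})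
  (mu : A -> gT) (sT : finGroupType) (Gs : {group sT}) (pi : A -> sT) : Prop :=
  [/\ @is_ghom A (fin_grp sT) pi,
      forall x, pi x \in Gs,
      forall y, y \in Gs -> exists x, pi x = y
    & forall x, pi x = 1 <-> covK G mu x].

(* M = R / K, i.e. the image of R in G^* *)
Definition is_multiplicator (A : grp) (gT : finGroupType) (mu : A -> gT)
  (sT : finGroupType) (pi : A -> sT) (M : {set sT}) : Prop :=
  forall y, y \in M <-> exists x, covR mu x /\ pi x = y.

Definition allowable (sT : finGroupType) (Gs M N U : {group sT}) : bool :=
  [&& U \proper M, U <| Gs & M :==: N * U].

From HB Require Import structures.
From mathcomp Require Import all_boot all_fingroup all_solvable.
From Stdlib Require Import ClassicalEpsilon.
Set Implicit Arguments. Unset Strict Implicit. Unset Printing Implicit Defensive.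
Import GroupScope.

(* The covering data only enter through the natural map theta : Gs -> G
   induced by mu, whose kernel is the multiplicator M; since K contains
   [R, L] and R^k, M is centralized by the preimage of F(G) and has
   squarefree exponent dividing k. *)

Definition rad (n : nat) : nat := \prod_(p <- primes n) p.

Lemma rad_gt0 n : 0 < rad n.
Proof.
rewrite /rad big_seq; apply: prodn_cond_gt0 => p.
by rewrite mem_primes => /andP[/prime_gt0].
Qed.

Lemma logn_prod_uniq_primes p (s : seq nat) : uniq s -> all prime s ->
  logn p (\prod_(q <- s) q) = (p \in s).
Proof.
elim: s => [|q s IHs] /=; first by rewrite big_nil logn1.
case/andP=> q_s uniq_s /andP[pr_q pr_s]; rewrite big_cons lognM; first last.
- by rewrite big_seq; apply: prodn_cond_gt0 => i /(allP pr_s)/prime_gt0.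
- exact: prime_gt0.
rewrite IHs // logn_prime // inE.
by case: eqP => [->|] //=; rewrite (negbTE q_s).
Qed.

Lemma logn_rad p n : logn p (rad n) <= 1.
Proof.
rewrite /rad logn_prod_uniq_primes ?primes_uniq //; first by case: (p \in _).
by apply/allP => q; rewrite mem_primes => /andP[].
Qed.

Lemma prime_dvd_rad m n p : m %| n -> 0 < n -> p \in primes m -> p %| rad n.
Proof.
move=> dv_mn n_gt0; rewrite mem_primes => /and3P[pr_p m_gt0 p_m].
have p_n : p \in primes n by rewrite mem_primes pr_p n_gt0 (dvdn_trans p_m dv_mn).
by rewrite /rad (big_rem _ p_n) /= dvdn_mulr.
Qed.

Section FCentralSeries.
Variable gT : finGroupType.
Implicit Types X V N : {group gT}.

(* Sufficient condition for N to be a candidate below V: the section V/N is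
   central in F(X) and has a squarefree exponent r, so each of its Sylow
   subgroups is elementary abelian. *)
Lemma Fcand_squarefree X V N r : V \subset 'F(X) -> 0 < r ->
  (forall p, logn p r <= 1) ->
  N <| 'F(X) -> N \subset V -> [~: V, 'F(X)] \subset N ->
  (forall x, x \in V -> x ^+ r \in N) -> Fcand X V N.
Proof.
move=> sVF r_gt0 sqf_r nsNF sNV sVFN rV_N.
have nNV : V \subset 'N(N) := subset_trans sVF (normal_norm nsNF).
have abVN : abelian (V / N).
  by apply: sub_der1_abelian; apply: subset_trans sVFN; apply: commgS.
rewrite /Fcand nsNF sNV sVFN abVN /=.
apply/allP => p; rewrite mem_primes => /and3P[pr_p _ _].
rewrite abelemE // (abelianS (pcore_sub _ _) abVN) /=.
apply/exponentP => a Op_a.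
have ar1 : a ^+ r = 1.
  have /morphimP[x Nx Vx ->] := subsetP (pcore_sub p _) a Op_a.
  by rewrite -morphX //; apply: coset_id; apply: rV_N.
have p_a : p.-elt a := mem_p_elt (pcore_pgroup _ _) Op_a.
have log_a : logn p #[a] <= 1.
  by apply: leq_trans (sqf_r p); apply: dvdn_leq_log; rewrite ?order_dvdn ?ar1.
apply/eqP; rewrite -order_dvdn -(part_pnat_id p_a) p_part.
by rewrite (dvdn_trans (dvdn_exp2l p log_a)) ?expn1.
Qed.

Lemma Fcand_self X V : V <| 'F(X) -> Fcand X V V.
Proof.
move=> nsVF; apply: (@Fcand_squarefree _ _ _ 1) => //.
- exact: normal_sub.
- by move=> p; rewrite logn1.
- by rewrite (commg_subl V 'F(X)) normal_norm.
Qed.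

Lemma Fcand_pow X V N r : V \subset 'F(X) ->
  (forall p, p \in primes #|V| -> p %| r) -> Fcand X V N ->
  forall x, x \in V -> x ^+ r \in N.
Proof.
move=> sVF r_primes /and5P[nsNF _ _ abVN /allP elemVN] x Vx.
have Nx : x \in 'N(N) := subsetP (subset_trans sVF (normal_norm nsNF)) x Vx.
apply: coset_idr; first exact: groupX.
rewrite morphX //; set a := coset N x.
have VNa : a \in V / N := mem_quotient N Vx.
apply/eqP; rewrite -order_dvdn; apply/dvdn_partP; first exact: order_gt0.
move=> p; rewrite mem_primes => /and3P[pr_p _ p_a].
have p_VN : p %| #|V / N| := dvdn_trans p_a (order_dvdG VNa).
have /elemVN : p \in primes #|V / N| by rewrite mem_primes pr_p cardG_gt0.
rewrite abelemE // => /andP[_ exp_p].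
have Op_ap : a.`_p \in 'O_p(V / N).
  apply: (subsetP (pcore_max _ _)) (cycle_id _); first exact: p_elt_constt.
  rewrite -sub_abelian_normal // cycle_subG.
  by apply: (subsetP _ _ (cycle_constt p a)); rewrite cycle_subG.
rewrite -order_constt; apply: dvdn_trans (dvdn_exponent Op_ap) _.
apply: dvdn_trans exp_p (r_primes p _).
by rewrite mem_primes pr_p cardG_gt0 (dvdn_trans p_VN (dvdn_quotient _ _)).
Qed.

Lemma Fnu_normal X i : Fnu X i <| 'F(X).
Proof.
elim: i => [|i IHi] /=; first exact: normal_refl.
apply/andP; split.
  exact: subset_trans (bigcap_inf _ (Fcand_self IHi)) (normal_sub IHi).
by apply/norms_bigcap/bigcapsP => N /and5P[/normal_norm].
Qed.

Lemma Fnu_sub X i : Fnu X i \subset X.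
Proof. exact: subset_trans (normal_sub (Fnu_normal X i)) (Fitting_sub X). Qed.

Lemma Fnu_minimal X i N : Fcand X (Fnu X i) N -> Fnu X i.+1 \subset N.
Proof. exact: bigcap_inf. Qed.

Lemma Fnu_cand X i : Fcand X (Fnu X i) (Fnu X i.+1).
Proof.
have nsVF := Fnu_normal X i; have sVF := normal_sub nsVF.
apply: (@Fcand_squarefree _ _ _ (rad #|X|)) => //.
- exact: rad_gt0.
- by move=> p; apply: logn_rad.
- exact: Fnu_normal.
- exact: Fnu_minimal (Fcand_self nsVF).
- by apply/bigcapsP => N /and5P[].
- move=> x Vx; apply/bigcapP => N candN; apply: Fcand_pow sVF _ candN x Vx => p.
  by apply: prime_dvd_rad; [apply/cardSg/Fnu_sub | apply: cardG_gt0].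
Qed.

Lemma Fnu_decreasing X i j : i <= j -> Fnu X j \subset Fnu X i.
Proof.
move/subnK <-; elim: (j - i) => [|k IHk]; first exact: subxx.
by apply: subset_trans IHk; case/and5P: (Fnu_cand X (k + i)).
Qed.

End FCentralSeries.

Section FCentralSeriesMorphim.
Variables (aT rT : finGroupType) (D X : {group aT}) (phi : {morphism D >-> rT}).
Hypotheses (sXD : X \subset D) (phiF : phi @* 'F(X) = 'F(phi @* X)).

Let sFD : 'F(X) \subset D := subset_trans (Fitting_sub X) sXD.

(* rad #|X| is a squarefree exponent fit for all sections inside phi(X). *)
Let primes_rad_img (A : {group rT}) : A \subset phi @* X ->
  forall p, p \in primes #|A| -> p %| rad #|X|.
Proof.
move=> sAX p; apply: prime_dvd_rad (cardG_gt0 X).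
exact: dvdn_trans (cardSg sAX) (dvdn_morphim _ _).
Qed.

Lemma Fcand_morphpre (V : {group aT}) (N' : {group rT}) : V <| 'F(X) ->
  Fcand (phi @* X) (phi @* V) N' -> Fcand X V (V :&: phi @*^-1 N').
Proof.
move=> nsVF candN'; have [nsN'F _ sV'FN' _ _] := and5P candN'.
have sVF := normal_sub nsVF; have sVD := subset_trans sVF sFD.
apply: (@Fcand_squarefree _ _ _ _ (rad #|X|)) => //.
- exact: rad_gt0.
- by move=> p; apply: logn_rad.
- have nN'F : 'F(X) \subset phi @*^-1 'N(N').
    by rewrite -sub_morphim_pre // phiF normal_norm.
  rewrite /normal (subset_trans (subsetIl _ _) sVF) /=.
  by rewrite normsI ?(normal_norm nsVF) ?(subset_trans nN'F (morphpre_norm _ _)).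
- exact: subsetIl.
- have sVFD : [~: V, 'F(X)] \subset D.
    by apply: subset_trans sFD; rewrite commg_subr (subset_trans sVF) ?normG.
  rewrite subsetI commg_subl (normal_norm nsVF) /=.
  by rewrite -sub_morphim_pre // morphimR // phiF.
- move=> x Vx; have Dx := subsetP sVD x Vx.
  rewrite inE groupX //= mem_morphpre ?groupX // morphX //.
  apply: (Fcand_pow _ _ candN' (mem_morphim phi Dx Vx)).
  - by rewrite -phiF morphimS.
  - by apply: primes_rad_img; rewrite morphimS // (subset_trans sVF (Fitting_sub X)).
Qed.

Lemma Fcand_morphim (V B : {group aT}) : V <| 'F(X) ->
  Fcand X V B -> Fcand (phi @* X) (phi @* V) (phi @* B).
Proof.
move=> nsVF candB; have [nsBF sBV sVFB _ _] := and5P candB.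
have sVF := normal_sub nsVF; have sVX := subset_trans sVF (Fitting_sub X).
apply: (@Fcand_squarefree _ _ _ _ (rad #|X|)).
- by rewrite -phiF morphimS.
- exact: rad_gt0.
- by move=> p; apply: logn_rad.
- by rewrite -phiF morphim_normal.
- exact: morphimS.
- by rewrite -phiF -morphimR ?morphimS // (subset_trans sVF sFD).
- move=> _ /morphimP[x Dx Vx ->]; rewrite -morphX //.
  apply: mem_morphim; first exact: groupX.
  apply: (Fcand_pow sVF _ candB Vx) => p p_V.
  by apply: prime_dvd_rad p_V; [apply: cardSg | apply: cardG_gt0].
Qed.

Lemma Fnu_morphim i : phi @* Fnu X i = Fnu (phi @* X)%G i.
Proof.
elim: i => [|i IHi] /=; first exact: phiF.
have nsVF := Fnu_normal X i.
have eV : (phi @* Fnu X i)%G = Fnu (phi @* X)%G i by apply: val_inj.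
apply/eqP; rewrite eqEsubset; apply/andP; split.
- have candY := Fnu_cand (phi @* X)%G i; rewrite -eV in candY.
  have := Fnu_minimal (Fcand_morphpre nsVF candY).
  rewrite subsetI => /andP[_]; rewrite -sub_morphim_pre //.
  exact: subset_trans (Fnu_sub X i.+1) sXD.
- by apply: Fnu_minimal; rewrite -eV; apply: Fcand_morphim (Fnu_cand X i).
Qed.

End FCentralSeriesMorphim.

Section FittingMorphim.
Variables (aT rT : finGroupType) (D G : {group aT}) (phi : {morphism D >-> rT}).
Hypothesis sGD : G \subset D.

Lemma Fitting_preim_normal : G :&: phi @*^-1 'F(phi @* G) <| G.
Proof.
have sGD' : phi @* G \subset phi @* D := morphimS phi sGD.
apply: (@normalGI _ (phi @*^-1 (phi @* G))); first by rewrite -sub_morphim_pre.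
rewrite morphpre_normal ?Fitting_normal //.
exact: subset_trans (Fitting_sub _) sGD'.
Qed.

(* phi maps F(G) onto F(phi(G)) as soon as the part of G over F(phi(G)) is
   nilpotent (the inclusion into F(phi(G)) always holds). *)
Lemma morphim_Fitting_eq : nilpotent (G :&: phi @*^-1 'F(phi @* G)) ->
  phi @* 'F(G) = 'F(phi @* G).
Proof.
move=> nilP; apply/eqP; rewrite eqEsubset; apply/andP; split.
  apply: Fitting_max; first exact/morphim_normal/Fitting_normal.
  exact/morphim_nil/Fitting_nil.
have sPF : G :&: phi @*^-1 'F(phi @* G) \subset 'F(G).
  exact: Fitting_max Fitting_preim_normal nilP.
by rewrite -(setIidPr (Fitting_sub (phi @* G))) -morphim_setIpre morphimS.
Qed.

End FittingMorphim.

Lemma central_ext_nil (aT rT : finGroupType) (D L : {group aT})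
    (phi : {morphism D >-> rT}) :
  L \subset D -> 'ker_L phi \subset 'Z(L) -> nilpotent (phi @* L) -> nilpotent L.
Proof.
move=> sLD sKZ nil_phiL; rewrite -quotient_center_nil.
have nZL : L \subset 'N('Z(L)) := normal_norm (center_normal L).
have sKK : 'ker (restrm sLD phi) \subset 'ker (restrm nZL (coset 'Z(L))).
  by rewrite !ker_restrm ker_coset subsetI subsetIl.
have -> : L / 'Z(L) = factm sKK (subxx L) @* (phi @* L).
  by rewrite -(restrmEsub sLD phi (subxx L)) morphim_factm restrmEsub.
exact: morphim_nil.
Qed.

Section CentralCover.
Variables (gT sT : finGroupType) (G : {group gT}) (Gs M : {group sT}).
Variable theta : {morphism Gs >-> gT}.
Hypotheses (theta_onto : theta @* Gs = G) (ker_theta : 'ker theta = M).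
Hypothesis cent_M : theta @*^-1 'F(G) \subset 'C(M).
Hypothesis exp_M : forall m, m \in M -> m ^+ Fk G = 1.

(* The preimage of F(G) is a central extension of F(G), hence nilpotent. *)
Lemma cover_Fitting_nil : nilpotent (theta @*^-1 'F(G)).
Proof.
apply: (@central_ext_nil _ _ _ _ theta (morphpre_sub _ _)).
  rewrite subsetI subsetIl ker_theta centsC.
  by rewrite /= (subset_trans cent_M) ?centS ?subsetIr.
by rewrite morphpreK ?Fitting_nil // theta_onto Fitting_sub.
Qed.

Lemma theta_Fitting : theta @* 'F(Gs) = 'F(G).
Proof.
rewrite -theta_onto morphim_Fitting_eq //.
rewrite theta_onto (setIidPr (morphpre_sub _ _)); exact: cover_Fitting_nil.
Qed.

Lemma theta_Fnu i : theta @* Fnu Gs i = Fnu G i.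
Proof.
have eG : (theta @* Gs)%G = G by apply: val_inj.
rewrite -[in RHS]eG Fnu_morphim //.
by rewrite theta_Fitting theta_onto.
Qed.

Lemma Fnu_sub_cover c : has_Fclass G c -> Fnu Gs c \subset M.
Proof.
case/andP=> /eqP Gc1 _.
by rewrite -ker_theta ker_trivg_morphim Fnu_sub /= theta_Fnu Gc1 subxx.
Qed.

(* ... and any term of the F-central series of Gs inside M is followed by
   the trivial group: M is central in F(Gs) and has squarefree exponent. *)
Lemma Fnu_succ_trivial c : Fnu Gs c \subset M -> Fnu Gs c.+1 = 1 :> {set sT}.
Proof.
move=> sNM; apply/trivgP/Fnu_minimal.
have sFL : 'F(Gs) \subset theta @*^-1 'F(G).
  by rewrite -sub_morphim_pre ?Fitting_sub // theta_Fitting.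
apply: (@Fcand_squarefree _ _ _ _ (Fk G)).
- exact: normal_sub (Fnu_normal Gs c).
- exact: rad_gt0. (* Fk G is rad (Frank G) by definition *)
- by move=> p; apply: logn_rad.
- exact: normal1.
- exact: sub1G.
- rewrite subG1; apply/eqP/commG1P; apply: subset_trans sNM _.
  by rewrite centsC (subset_trans sFL cent_M).
- by move=> x Nx; rewrite exp_M ?group1 // (subsetP sNM).
Qed.

Lemma quotient_cover_Fitting (U : {group sT}) : U <| Gs -> U \subset M ->
  'F(Gs) / U = 'F(Gs / U).
Proof.
move=> nsUGs sUM; have nUGs := normal_norm nsUGs.
apply: morphim_Fitting_eq => //.
set P := Gs :&: _.
have nsP : P <| Gs := Fitting_preim_normal _ nUGs.
have sKU : 'ker (coset U) \subset 'ker theta by rewrite ker_coset ker_theta.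
have sPF : coset U @* P \subset 'F(Gs / U) by rewrite morphim_setIpre subsetIr.
have nil_thetaP : nilpotent (theta @* P).
  rewrite -(morphim_factm sKU nUGs).
  exact/morphim_nil/(nilpotentS sPF (Fitting_nil _)).
have sPL : P \subset theta @*^-1 'F(G).
  rewrite -sub_morphim_pre; last exact: normal_sub nsP.
  by apply: Fitting_max nil_thetaP; rewrite -theta_onto morphim_normal.
exact: nilpotentS sPL cover_Fitting_nil.
Qed.

Lemma quotient_cover_Fnu (U : {group sT}) : U <| Gs -> U \subset M ->
  forall i, Fnu Gs i / U = Fnu (Gs / U)%G i.
Proof.
move=> nsUGs sUM i; have nUGs := normal_norm nsUGs.
have eGU : (coset U @* Gs)%G = (Gs / U)%G by apply: val_inj.
by rewrite -eGU; apply: (@Fnu_morphim _ _ 'N(U)%G) => //; apply: quotient_cover_Fitting.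
Qed.

(* The quotient of Gs by an allowable subgroup U has F-class c+1: its
   nu_{c+1} is trivial, and its nu_j for j <= c is not, since it contains
   the image of nu_c(Gs) and M = nu_c(Gs) U is not inside U.  Its top
   section (Gs/U)/(M/U) is Gs/M, that is G. *)
Lemma cover_descendant c (U : {group sT}) :
  has_Fclass G c -> allowable Gs M (Fnu Gs c) U -> descendant (Gs / U)%G G c.
Proof.
move=> classG /and3P[ltUM nsUGs /eqP defM].
have sUM := proper_sub ltUM; have nUGs := normal_norm nsUGs.
have nsMGs : M <| Gs by rewrite -ker_theta ker_normal.
have sNM := Fnu_sub_cover classG.
apply/andP; split; [apply/andP; split|].
- by rewrite -quotient_cover_Fnu // (Fnu_succ_trivial sNM) quotient1.
- apply/forallP => j; rewrite -quotient_cover_Fnu // -subG1.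
  rewrite quotient_sub1 ?(subset_trans (Fnu_sub _ _) nUGs) //.
  case/andP: ltUM => _; apply: contra => sFjU.
  rewrite defM mul_subG // (subset_trans _ sFjU) // Fnu_decreasing //.
  by rewrite -ltnS ltn_ord.
- rewrite -quotient_cover_Fnu // -quotientMidr -defM.
  apply: isog_trans (third_isog sUM nsUGs nsMGs) _.
  by rewrite -ker_theta -[X in _ \isog X]theta_onto first_isog.
Qed.

End CentralCover.

Section GrpHom.
Variables (A : grp) (hT : finGroupType) (h : A -> hT).
Hypothesis h_hom : @is_ghom A (fin_grp hT) h.

Lemma ghomM x y : h (gmul x y) = h x * h y.
Proof. exact: h_hom. Qed.

Lemma ghom1 : h (gone A) = 1.
Proof.
have e := h_hom (gone A) (gone A); rewrite gmul1 /= in e.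
by apply: (@mulgI _ (h (gone A))); rewrite mulg1 -e.
Qed.

Lemma ghomV x : h (ginv x) = (h x)^-1.
Proof.
have e := h_hom (ginv x) x; rewrite gmulV ghom1 /= in e.
by rewrite -(mulgK (h x) (h (ginv x))) -e mul1g.
Qed.

Lemma ghom_pow x k : h (gpow x k) = h x ^+ k.
Proof. by elim: k => [|k IHk] /=; rewrite ?ghom1 // ghomM IHk expgS. Qed.

Lemma ghom_comm x y : h (gcomm x y) = [~ h x, h y].
Proof. by rewrite /gcomm !ghomM !ghomV /commg /conjg !mulgA. Qed.

Lemma ghom_gen_by (S : A -> Prop) (H : {group hT}) x :
  (forall y, S y -> h y \in H) -> gen_by S x -> h x \in H.
Proof.
move=> hS; elim=> [y Sy | | a b _ Ha _ Hb | a _ Ha]; first exact: hS.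
- by rewrite ghom1.
- by rewrite ghomM groupM.
- by rewrite ghomV groupV.
Qed.

End GrpHom.

Section CoveringMap.
Variables (gT : finGroupType) (G : {group gT}) (n : nat) (g : 'I_n -> gT).
Variables (F : grp) (f : 'I_n -> F) (mu : F -> gT).
Variables (sT : finGroupType) (Gs M : {group sT}) (pi : F -> sT).
Hypotheses (gen_G : <<[set g i | i : 'I_n]>> = G) (free_f : free_on f).
Hypotheses (mu_hom : @is_ghom F (fin_grp gT) mu) (mu_f : forall i, mu (f i) = g i).
Hypotheses (pi_cover : covering_map G mu Gs pi) (defM : is_multiplicator mu pi M).

Let pi_hom : @is_ghom F (fin_grp sT) pi. Proof. by case: pi_cover. Qed.
Let pi_in : forall x, pi x \in Gs. Proof. by case: pi_cover. Qed.
Let pi_onto : forall y, y \in Gs -> exists x, pi x = y. Proof. by case: pi_cover. Qed.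
Let ker_pi : forall x, pi x = 1 <-> covK G mu x. Proof. by case: pi_cover. Qed.

(* K = [R, L] R^k lies in R = ker mu, so mu factors through pi. *)
Lemma mu_covK x : covK G mu x -> mu x = 1.
Proof.
move=> Kx; apply/set1P; apply: (ghom_gen_by mu_hom _ Kx).
move=> _ [[r [l [Rr [_ ->]]]] | [r [Rr ->]]]; apply/set1P.
- by rewrite ghom_comm // Rr comm1g.
- by rewrite ghom_pow // Rr expg1n.
Qed.

Lemma mu_in x : mu x \in G.
Proof.
apply: (ghom_gen_by mu_hom _ (proj1 free_f x)) => _ [i ->].
by rewrite mu_f -gen_G mem_gen // imset_f.
Qed.

(* The natural map theta : Gs -> G induced by mu, defined through a choice of
   preimages under pi. *)
Definition theta (y : sT) : gT :=
  mu (epsilon (inhabits (gone F)) (fun x => pi x = y)).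

(* theta is well defined: it does not depend on the chosen preimage. *)
Lemma theta_pi x : theta (pi x) = mu x.
Proof.
rewrite /theta; set x' := epsilon _ _.
have pi_x' : pi x' = pi x.
  by apply: (epsilon_spec (inhabits (gone F)) (fun z => pi z = pi x)); exists x.
have /mu_covK : covK G mu (gmul (ginv x) x').
  by apply/ker_pi; rewrite ghomM // ghomV // pi_x' mulVg.
rewrite ghomM // ghomV // => e.
by rewrite -(mulKVg (mu x) (mu x')) e mulg1.
Qed.

Lemma theta_morphM : {in Gs &, {morph theta : x y / x * y}}.
Proof.
move=> _ _ /pi_onto[x <-] /pi_onto[y <-].
by rewrite -[pi x * pi y]ghomM // !theta_pi ghomM.
Qed.

Canonical theta_morphism := Morphism theta_morphM.

Lemma theta_onto : theta @* Gs = G.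
Proof.
apply/eqP; rewrite eqEsubset; apply/andP; split.
  by apply/subsetP => _ /morphimP[y _ /pi_onto[x <-] ->]; rewrite /= theta_pi mu_in.
rewrite -gen_G gen_subG; apply/subsetP => _ /imsetP[i _ ->].
by rewrite -mu_f -theta_pi mem_morphim.
Qed.

Lemma ker_theta : 'ker theta = M.
Proof.
apply/setP => y; apply/idP/idP.
- case/morphpreP => /pi_onto[x <-]; rewrite inE /= theta_pi => /eqP Rx.
  by apply/defM; exists x.
- case/defM => x [Rx <-]; apply/morphpreP; split; first exact: pi_in.
  by rewrite /= theta_pi Rx inE.
Qed.

(* [R, L] lies in the kernel: M is centralized by the preimage of F(G). *)
Lemma cover_cent_M : theta @*^-1 'F(G) \subset 'C(M).
Proof.
apply/subsetP => _ /morphpreP[/pi_onto[l <-] Ll]; apply/centP => _ /defM[r [Rr <-]].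
rewrite /= theta_pi in Ll.
have /ker_pi : covK G mu (gcomm r l) by apply: gen_in; left; exists r, l.
by rewrite ghom_comm // => /eqP/commgP/commute_sym.
Qed.

(* R^k lies in the kernel: M has exponent dividing k. *)
Lemma cover_exp_M m : m \in M -> m ^+ Fk G = 1.
Proof.
case/defM => r [Rr <-]; rewrite -ghom_pow //; apply/ker_pi.
by apply: gen_in; right; exists r.
Qed.

End CoveringMap.

Theorem lemma4p5 (gT : finGroupType) (G : {group gT}) (c n : nat)
  (g : 'I_n -> gT) (F : grp) (f : 'I_n -> F) (mu : F -> gT)
  (sT : finGroupType) (Gs M U : {group sT}) (pi : F -> sT) :
  <<[set g i | i : 'I_n]>> = G ->
  has_Fclass G c -> 0 < c ->
  free_on f ->
  @is_ghom F (fin_grp gT) mu -> (forall i, mu (f i) = g i) ->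
  covering_map G mu Gs pi ->
  is_multiplicator mu pi M ->
  allowable Gs M (Fnu Gs c) U ->
  descendant (Gs / U)%G G c.
Proof.
move=> gen_G classG _ free_f mu_hom mu_f pi_cover defM allowU.
have onto := theta_onto gen_G free_f mu_hom mu_f pi_cover.
have kerM := ker_theta mu_hom pi_cover defM.
have centM := cover_cent_M mu_hom pi_cover defM.
have expM := cover_exp_M pi_cover defM.
exact: (cover_descendant onto kerM centM expM classG allowU).
Qed.
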